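(* Let $tn=(T,\prec^+,\alpha)$ be a task network in a domain $D$ with $C_d\neq\infty$. Then $tn$ can be decomposed into at most $C_c^{\sum_{i=0}^{C_d-1} C_\#\cdot C_s^i}$ pairwise non-isomorphic primitive task networks $tn'=(T',\prec'^+,\alpha')$, and each of these satisfies $|T'|\le |T|+C_\#\cdot(C_s^{C_d}-1)$.
   Context: An HTN domain is $D=(F,A,\mathcal{C},\delta,M)$ with propositions $F$, actions $A$, compound task names $\mathcal{C}$ ($A\cap\mathcal{C}=\emptyset$), action semantics $\delta$, and decomposition methods $M$, a set of pairs $(c,tn_m)$ with $c\in\mathcal{C}$ and $tn_m$ a task network. A task network is $(T,\prec^+,\alpha)$ with $T$ a finite set of tasks, $\prec^+$ a strict partial order on $T$, $\alpha:T\to A\cup\mathcal{C}$; a task $t$ is compound if $\alpha(t)\in\mathcal{C}$, and the network is primitive if it has no compound tasks. Decomposing a compound task $t$ via a method $(\alpha(t),tn_m)\in M$ replaces $t$ by the tasks of $tn_m$ (ordered among themselves as in $tn_m$), each related to the other tasks exactly as $t$ was. Measures: $C_\#=|\{t\in T:\alpha(t)\in\mathcal{C}\}|$ is the number of compound tasks in $tn$; $C_s=\max\{|T_m| : (c,(T_m,\prec^+_m,\alpha_m))\in M\}$; $C_c=\max_{c\in\mathcal{C}}|\{tn_m : (c,tn_m)\in M\}|$, the maximum number of pairwise non-isomorphic networks a compound task can be decomposed into; $C_d$ is defined recursively: $C_d=0$ for primitive networks, and a network has $C_d=i$ if $i$ is the smallest integer such that every decomposition of all compound tasks of the network results in a network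 with $C_d\le i-1$; $C_d=\infty$ if no such $i$ exists. *)

From mathcomp Require Import all_boot all_order all_algebra.
From Stdlib Require Import ClassicalEpsilon.
Set Implicit Arguments. Unset Strict Implicit. Unset Printing Implicit Defensive.
Import Order.TTheory GRing.Theory Num.Theory.

(* Task names: actions A and compound task names C; the disjoint union A + C
   makes A ∩ C = ∅ automatic. Propositions and action semantics play no role
   in decomposition and the measures, so they are omitted. *)

(* A task network: finite set of task identifiers (a duplicate-free list of
   nats), an order relation prec (only its restriction to tasks matters),
   and a labelling alpha. *)
Record TN (A C : Type) := mkTN {
  tasks : seq nat;
  prec  : rel nat;
  lab   : nat -> A + C }.

Section HTN.
Variables (A C : eqType).
Implicit Types (tn : TN A C) (M : seq (C * TN A C)).

Definition wf tn : Prop :=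
  uniq (tasks tn) /\
  {in tasks tn, forall x, ~~ prec tn x x} /\
  {in tasks tn & &, forall x y z, prec tn x y -> prec tn y z -> prec tn x z}.

Definition is_compound (l : A + C) : bool := if l is inr _ then true else false.

Definition compound_tasks tn : seq nat :=
  [seq x <- tasks tn | is_compound (lab tn x)].

Definition Cnum tn : nat := size (compound_tasks tn).

Definition primitive tn : bool := all (fun x => ~~ is_compound (lab tn x)) (tasks tn).

Definition iso (tn1 tn2 : TN A C) : Prop :=
  exists f : nat -> nat,
    {in tasks tn1 &, injective f} /\
    perm_eq (map f (tasks tn1)) (tasks tn2) /\
    {in tasks tn1, forall x, lab tn2 (f x) = lab tn1 x} /\
    {in tasks tn1 &, forall x y, prec tn2 (f x) (f y) = prec tn1 x y}.

Definition Cs M : nat := \max_(m <- M) size (tasks m.2).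

Fixpoint iso_reps (s : seq (TN A C)) : seq (TN A C) :=
  match s with
  | [::] => [::]
  | x :: s' =>
      let r := iso_reps s' in
      if excluded_middle_informative (exists y, List.In y r /\ iso x y)
      then r else x :: r
  end.

Definition nclasses (s : seq (TN A C)) : nat := size (iso_reps s).

Definition Cc M : nat :=
  \max_(mc <- M) nclasses [seq m.2 | m <- M & m.1 == mc.1].

Definition step M tn (t : nat) (tn' : TN A C) : Prop :=
  exists (c : C) (m : TN A C) (f : nat -> nat),
    [/\ t \in tasks tn, lab tn t = inr c, List.In (c, m) M,
        {in tasks m &, injective f} &
        {in tasks m, forall x, f x \notin [seq y <- tasks tn | y != t]}] /\
    [/\ perm_eq (tasks tn') ([seq y <- tasks tn | y != t] ++ map f (tasks m)),
        {in [seq y <- tasks tn | y != t], forall y, lab tn' y = lab tn y} /\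
          {in tasks m, forall x, lab tn' (f x) = lab m x},
        {in [seq y <- tasks tn | y != t] &, forall x y, prec tn' x y = prec tn x y} &
        {in tasks m &, forall x y, prec tn' (f x) (f y) = prec m x y}] /\
    {in tasks m & [seq y <- tasks tn | y != t], forall x y,
        prec tn' (f x) y = prec tn t y /\ prec tn' y (f x) = prec tn y t}.

Inductive reach M : TN A C -> TN A C -> Prop :=
  | reach0 tn : reach M tn tn
  | reachS tn t tn1 tn2 : step M tn t tn1 -> reach M tn1 tn2 -> reach M tn tn2.

Definition decomposes_to M tn tn' : Prop := reach M tn tn' /\ primitive tn'.

Inductive levelR M : seq nat -> TN A C -> TN A C -> Prop :=
  | levelR0 tn : levelR M [::] tn tn
  | levelRS t S tn tn1 tn2 :
      step M tn t tn1 -> levelR M S tn1 tn2 -> levelR M (t :: S) tn tn2.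

Definition level M tn tn' : Prop := levelR M (compound_tasks tn) tn tn'.

(* Dle M tn i  <->  C_d(tn) <= i *)
Fixpoint Dle M tn (i : nat) : Prop :=
  match i with
  | 0 => primitive tn
  | i'.+1 => forall tn', level M tn tn' -> Dle M tn' i'
  end.

(* C_d(tn) = d (in particular C_d(tn) <> infinity) *)
Definition is_Cd M tn (d : nat) : Prop :=
  Dle M tn d /\ forall j, j < d -> ~ Dle M tn j.

Definition pairwise_noniso (s : seq (TN A C)) : Prop :=
  forall s1 s2 s3 x y, s = s1 ++ x :: s2 ++ y :: s3 -> ~ iso x y.

End HTN.

(* Decomposition is confluent up to isomorphism: decomposing a task with a
   method gives the same network up to isomorphism however the new tasks are
   named and even if the network and the method are replaced by isomorphic
   copies, and decompositions of two distinct tasks commute.  Hence every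
   decomposition into a primitive network can be reordered so that it starts
   with a full level, i.e. with the decomposition of all C_# compound tasks;
   by the definition of C_d, at most C_d levels occur.  Up to isomorphism a
   level offers at most C_c choices for each of the C_# compound tasks and
   leaves at most C_# * C_s compound tasks, so induction on C_d bounds the
   number of non-isomorphic outcomes by C_c ^ (C_# + C_# C_s + ... +
   C_# C_s ^ (C_d - 1)).  A level also replaces C_# tasks by at most C_# C_s
   new ones, and the same induction gives the size bound. *)

From mathcomp Require Import all_boot all_order all_algebra.
From mathcomp Require Import zify.
From Stdlib Require Import ClassicalEpsilon.
Import Order.TTheory GRing.Theory Num.Theory.
Set Implicit Arguments. Unset Strict Implicit. Unset Printing Implicit Defensive.

Lemma uniq_map_inj_in (T1 T2 : eqType) (f : T1 -> T2) (s : seq T1) :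
  uniq (map f s) -> {in s &, injective f}.
Proof.
elim: s => [|z s IH] //= /andP[fz_s fs_uniq] x y; rewrite !inE.
case/predU1P=> [->|xs]; case/predU1P=> [->|ys] //.
- by move=> fzy; move: fz_s; rewrite fzy map_f.
- by move=> fxz; move: fz_s; rewrite -fxz map_f.
- exact: IH.
Qed.

Definition inv_in (f : nat -> nat) (s : seq nat) (y : nat) : nat :=
  nth 0 s (index y (map f s)).

Lemma inv_inK f s : {in s &, injective f} -> {in s, cancel f (inv_in f s)}.
Proof. by move=> f_inj x xs; apply: nth_index_map. Qed.

Lemma inv_in_mem f s y : y \in map f s -> inv_in f s y \in s /\ f (inv_in f s y) = y.
Proof.
move=> ys; have ys_lt : index y (map f s) < size s by rewrite -(size_map f) index_mem.
by rewrite /inv_in mem_nth // -(nth_map 0 0) // nth_index.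
Qed.

Lemma In_leq_bigmax (T : Type) (F : T -> nat) (s : seq T) x :
  List.In x s -> F x <= \max_(y <- s) F y.
Proof.
elim: s => [//|z s IH] /= [->|xs]; rewrite big_cons; first exact: leq_maxl.
exact: leq_trans (IH xs) (leq_maxr _ _).
Qed.

Section Isomorphism.
Variables A C : eqType.
Implicit Types a b c : TN A C.

Definition isow (f : nat -> nat) a b : Prop :=
  {in tasks a &, injective f} /\ perm_eq (map f (tasks a)) (tasks b) /\
  {in tasks a, forall x, lab b (f x) = lab a x} /\
  {in tasks a &, forall x y, prec b (f x) (f y) = prec a x y}.

Lemma isow_id a : isow id a a.
Proof. by split=> //; rewrite map_id. Qed.

Lemma iso_refl a : iso a a.
Proof. by exists id; apply: isow_id. Qed.

Lemma iso_of_perm f a b : uniq (tasks b) -> perm_eq (map f (tasks a)) (tasks b) ->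
  {in tasks a, forall x, lab b (f x) = lab a x} ->
  {in tasks a &, forall x y, prec b (f x) (f y) = prec a x y} -> iso a b.
Proof.
move=> ub fab f_lab f_prec; exists f; split=> //.
by apply: uniq_map_inj_in; rewrite (perm_uniq fab).
Qed.

Lemma isow_mem f a b x : isow f a b -> x \in tasks a -> f x \in tasks b.
Proof. by case=> _ [fab _] xa; rewrite -(perm_mem fab) map_f. Qed.

Lemma iso_sym a b : iso a b -> iso b a.
Proof.
case=> f [f_inj [fab [f_lab f_prec]]].
have inv_mem y : y \in tasks b -> inv_in f (tasks a) y \in tasks a /\
    f (inv_in f (tasks a) y) = y by rewrite -(perm_mem fab); apply: inv_in_mem.
exists (inv_in f (tasks a)); split; [|split; [|split]].
- move=> x y /inv_mem[_ fx] /inv_mem[_ fy] exy.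
  by rewrite -fx -fy exy.
- have inv_f_id : map (inv_in f (tasks a) \o f) (tasks a) = tasks a.
    by rewrite -[RHS]map_id; apply/eq_in_map => x xa; rewrite /= inv_inK.
  by rewrite -[X in perm_eq _ X]inv_f_id map_comp perm_map // perm_sym.
- by move=> y /inv_mem[xa fx]; rewrite -f_lab // fx.
- by move=> x y /inv_mem[xa fx] /inv_mem[ya fy]; rewrite -f_prec // fx fy.
Qed.

Lemma iso_trans a b c : iso a b -> iso b c -> iso a c.
Proof.
case=> f fab; case=> g [g_inj [gbc [g_lab g_prec]]].
have f_mem := isow_mem fab; case: fab => f_inj [fab [f_lab f_prec]].
exists (g \o f); split; [|split; [|split]].
- by move=> x y xa ya /g_inj /f_inj; apply; rewrite ?f_mem.
- by rewrite map_comp (perm_trans (perm_map g fab)).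
- by move=> x xa /=; rewrite g_lab ?f_lab ?f_mem.
- by move=> x y xa ya /=; rewrite g_prec ?f_prec ?f_mem.
Qed.

Lemma iso_size a b : iso a b -> size (tasks a) = size (tasks b).
Proof. by case=> f [_ [fab _]]; rewrite -(perm_size fab) size_map. Qed.

Lemma iso_primitive a b : iso a b -> primitive a -> primitive b.
Proof.
case=> f [_ [fab [f_lab _]]] /allP a_prim; apply/allP => y.
by rewrite -(perm_mem fab) => /mapP[x xa ->]; rewrite f_lab // a_prim.
Qed.

End Isomorphism.

Section Steps.
Variables (A C : eqType) (M : seq (C * TN A C)).
Hypothesis wfM : forall m, List.In m M -> wf m.2.
Implicit Types (a b : TN A C) (S : seq nat).

Definition rest a t : seq nat := [seq y <- tasks a | y != t].

Lemma mem_rest a t y : (y \in rest a t) = (y != t) && (y \in tasks a).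
Proof. exact: mem_filter. Qed.

Lemma mem_compound_tasks a t :
  (t \in compound_tasks a) = (t \in tasks a) && is_compound (lab a t).
Proof. by rewrite mem_filter andbC. Qed.

Record stepw a t b (c : C) (m : TN A C) (f : nat -> nat) : Prop := StepW {
  stepw_task : t \in tasks a;
  stepw_lab : lab a t = inr c;
  stepw_method : List.In (c, m) M;
  stepw_inj : {in tasks m &, injective f};
  stepw_fresh : {in tasks m, forall x, f x \notin rest a t};
  stepw_tasks : perm_eq (tasks b) (rest a t ++ map f (tasks m));
  stepw_lab_rest : {in rest a t, forall y, lab b y = lab a y};
  stepw_lab_new : {in tasks m, forall x, lab b (f x) = lab m x};
  stepw_prec_rest : {in rest a t &, forall y z, prec b y z = prec a y z};
  stepw_prec_new : {in tasks m &, forall x x', prec b (f x) (f x') = prec m x x'};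
  stepw_prec_new_rest : {in tasks m & rest a t, forall x y, prec b (f x) y = prec a t y};
  stepw_prec_rest_new : {in tasks m & rest a t, forall x y, prec b y (f x) = prec a y t} }.

Lemma stepP a t b : step M a t b <-> exists c m f, stepw a t b c m f.
Proof.
split=> [[c [m [f [[? ? ? ? ?] [[? [? ?] ? ?] prec_new_rest]]]]]|[c [m [f []]]]].
  by exists c, m, f; split=> // x y xm yr; have [] := prec_new_rest x y xm yr.
move=> ? ? ? ? ? ? ? ? ? ? new_rest rest_new; exists c, m, f.
by split; [|split; [|move=> x y xm yr; rewrite new_rest ?rest_new]].
Qed.

Section OneStep.
Variables (a b : TN A C) (t : nat) (c : C) (m : TN A C) (f : nat -> nat).
Hypothesis st : stepw a t b c m f.

Lemma stepw_memP y : y \in tasks b -> y \in rest a t \/ exists2 x, x \in tasks m & y = f x.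
Proof.
rewrite (perm_mem (stepw_tasks st)) mem_cat => /orP[|/mapP[x xm ->]]; first by left.
by right; exists x.
Qed.

Lemma stepw_rest_not_new y : y \in rest a t -> y \in map f (tasks m) = false.
Proof.
by move=> yr; apply/negbTE/mapP=> -[x xm yfx]; move: (stepw_fresh st xm); rewrite -yfx yr.
Qed.

Lemma stepw_mem_rest y : y \in rest a t -> y \in tasks b.
Proof. by move=> yr; rewrite (perm_mem (stepw_tasks st)) mem_cat yr. Qed.

Lemma stepw_mem_new x : x \in tasks m -> f x \in tasks b.
Proof. by move=> xm; rewrite (perm_mem (stepw_tasks st)) mem_cat map_f ?orbT. Qed.

Lemma stepw_uniq : uniq (tasks a) -> uniq (tasks b).
Proof.
move=> ua; rewrite (perm_uniq (stepw_tasks st)) cat_uniq filter_uniq //=.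
rewrite map_inj_in_uniq ?(proj1 (wfM (stepw_method st))) ?andbT; last exact: stepw_inj st.
by apply/hasP => -[_ /mapP[x xm ->]]; apply/negP; apply: stepw_fresh st _ xm.
Qed.

Lemma stepw_compound_tasks u : u \in compound_tasks a -> u != t -> u \in compound_tasks b.
Proof.
rewrite !mem_compound_tasks => /andP[ua cu] ut.
have ur : u \in rest a t by rewrite mem_rest ut.
by rewrite stepw_mem_rest // (stepw_lab_rest st).
Qed.

Lemma stepw_rest u : u \in rest a t ->
  perm_eq (rest b u) ([seq y <- rest a t | y != u] ++ map f (tasks m)).
Proof.
move=> ur; have new_ne_u : [seq y <- map f (tasks m) | y != u] = map f (tasks m).
  by apply/all_filterP/allP => _ /mapP[x xm ->]; apply: contraNneq (stepw_fresh st xm) => ->.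
by rewrite /rest -[X in _ ++ X]new_ne_u -filter_cat; apply/perm_filter/(stepw_tasks st).
Qed.

End OneStep.

Lemma step_uniq a t b : uniq (tasks a) -> step M a t b -> uniq (tasks b).
Proof. by move=> ua /stepP[c [m [f st]]]; apply: stepw_uniq st ua. Qed.

Lemma step_compound_tasks a t b u : step M a t b ->
  u \in compound_tasks a -> u != t -> u \in compound_tasks b.
Proof. by case/stepP=> c [m [f st]]; exact: (stepw_compound_tasks st). Qed.

Lemma step_task_compound a t b : step M a t b -> t \in compound_tasks a.
Proof.
by case/stepP=> c [m [f st]]; rewrite mem_compound_tasks (stepw_task st) (stepw_lab st).
Qed.

Lemma step_compound_tasks_sub a t b S : t \notin S ->
  {subset t :: S <= compound_tasks a} -> step M a t b -> {subset S <= compound_tasks b}.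
Proof.
move=> tS Sa Sb s sS; apply: (step_compound_tasks Sb); first by apply: Sa; rewrite inE sS orbT.
by apply: contraNneq tS => <-.
Qed.

Definition offset a : nat := (\max_(y <- tasks a) y).+1.

Definition decomp a t (m : TN A C) : TN A C :=
  let K := offset a in
  mkTN (rest a t ++ map (addn K) (tasks m))
    (fun x y => if K <= x then (if K <= y then prec m (x - K) (y - K) else prec a t y)
                else (if K <= y then prec a x t else prec a x y))
    (fun y => if K <= y then lab m (y - K) else lab a y).

Lemma stepw_decomp a t c m : t \in tasks a -> lab a t = inr c -> List.In (c, m) M ->
  stepw a t (decomp a t m) c m (addn (offset a)).
Proof.
move=> ta tc cm; have rest_low y : y \in rest a t -> (offset a <= y) = false.
  rewrite mem_rest => /andP[_ ya]; apply/negbTE; rewrite -ltnNge ltnS.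
  exact: (@leq_bigmax_seq _ _ xpredT id).
split; rewrite /decomp /=.
- exact: ta.
- exact: tc.
- exact: cm.
- by move=> x y _ _; apply: addnI.
- by move=> x _; apply/negP => /rest_low; rewrite leq_addr.
- exact: perm_refl.
- by move=> y /rest_low ->.
- by move=> x _; rewrite leq_addr addKn.
- by move=> y z /rest_low -> /rest_low ->.
- by move=> x x' _ _; rewrite !leq_addr !addKn.
- by move=> x y _ /rest_low ->; rewrite leq_addr.
- by move=> x y _ /rest_low ->; rewrite leq_addr.
Qed.

Lemma isow_rest g a a' t : isow g a a' -> t \in tasks a ->
  perm_eq (map g (rest a t)) (rest a' (g t)).
Proof.
case=> g_inj [g_perm _] ta.
have -> : map g (rest a t) = [seq y <- map g (tasks a) | y != g t].
  by rewrite filter_map; congr map; apply: eq_in_filter => y ya; rewrite /= (inj_in_eq g_inj).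
exact: perm_filter.
Qed.

Lemma stepw_iso g h a a' b b' t c c' m m' f f' :
  isow g a a' -> isow h m m' -> uniq (tasks b') ->
  stepw a t b c m f -> stepw a' (g t) b' c' m' f' -> iso b b'.
Proof.
move=> a_g m_h ub' st st'; have ta := stepw_task st.
have g_rest := isow_rest a_g ta.
have [_ [_ [g_lab g_prec]]] := a_g; have [_ [h_perm [h_lab h_prec]]] := m_h.
pose phi y := if y \in map f (tasks m) then f' (h (inv_in f (tasks m) y)) else g y.
have phi_rest y : y \in rest a t -> [/\ phi y = g y, g y \in rest a' (g t) & y \in tasks a].
  move=> yr; have ya : y \in tasks a by move: yr; rewrite mem_rest => /andP[].
  by split=> //; [rewrite /phi (stepw_rest_not_new st) | rewrite -(perm_mem g_rest) map_f].
have phi_new x : x \in tasks m -> phi (f x) = f' (h x) /\ h x \in tasks m'.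
  move=> xm; rewrite /phi map_f // inv_inK ?(isow_mem m_h) //.
  exact: stepw_inj st.
apply: (iso_of_perm (f := phi) ub').
- apply: perm_trans (perm_map phi (stepw_tasks st)) _.
  rewrite perm_sym (perm_trans (stepw_tasks st')) // map_cat perm_sym.
  have -> : map phi (rest a t) = map g (rest a t) by apply/eq_in_map => y /phi_rest[].
  have -> : map phi (map f (tasks m)) = map f' (map h (tasks m)).
    by rewrite -!map_comp; apply/eq_in_map => x /phi_new[].
  by rewrite perm_cat // perm_map.
- move=> y /(stepw_memP st) [yr|[x xm ->]].
  + have [-> gyr ya] := phi_rest y yr.
    by rewrite (stepw_lab_rest st') // (stepw_lab_rest st) // g_lab.
  + have [-> hxm] := phi_new x xm.
    by rewrite (stepw_lab_new st') // (stepw_lab_new st) // h_lab.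
- move=> y z /(stepw_memP st) [yr|[x xm ->]] /(stepw_memP st) [zr|[x' x'm ->]].
  + have [-> gyr ya] := phi_rest y yr; have [-> gzr za] := phi_rest z zr.
    by rewrite (stepw_prec_rest st') // (stepw_prec_rest st) // g_prec.
  + have [-> gyr ya] := phi_rest y yr; have [-> hx'm] := phi_new x' x'm.
    by rewrite (stepw_prec_rest_new st') // (stepw_prec_rest_new st) // g_prec.
  + have [-> hxm] := phi_new x xm; have [-> gzr za] := phi_rest z zr.
    by rewrite (stepw_prec_new_rest st') // (stepw_prec_new_rest st) // g_prec.
  + have [-> hxm] := phi_new x xm; have [-> hx'm] := phi_new x' x'm.
    by rewrite (stepw_prec_new st') // (stepw_prec_new st) // h_prec.
Qed.

Lemma step_transfer g a a' t b : isow g a a' -> uniq (tasks a') -> step M a t b ->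
  exists2 b', step M a' (g t) b' & iso b b'.
Proof.
move=> a_g ua' /stepP[c [m [f st]]].
have [_ [_ [g_lab _]]] := a_g.
have st' := stepw_decomp (isow_mem a_g (stepw_task st))
  (etrans (g_lab _ (stepw_task st)) (stepw_lab st)) (stepw_method st).
exists (decomp a' (g t) m); first by apply/stepP; exists c, m, (addn (offset a')).
exact: stepw_iso a_g (isow_id m) (stepw_uniq st' ua') st st'.
Qed.

Lemma reach_transfer a a' y : iso a a' -> uniq (tasks a') -> reach M a y ->
  exists2 y', reach M a' y' & iso y y'.
Proof.
move=> a_a' ua' r; elim: r a' a_a' ua' => [x|x t x1 x2 Sx _ IH] a' [g x_g] ua'.
  by exists a'; [apply: reach0 | exists g].
have [x1' Sx' x1_x1'] := step_transfer x_g ua' Sx.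
have [y' r' y_y'] := IH x1' x1_x1' (step_uniq ua' Sx').
by exists y'; first exact: reachS Sx' r'.
Qed.

Section Swap.
Variables (a a_u a_ut a_t a_tu mu mt : TN A C) (u t : nat) (cu ct : C).
Variables (fu ft fu' ft' : nat -> nat).
Hypotheses (Su : stepw a u a_u cu mu fu) (St : stepw a_u t a_ut ct mt ft).
Hypotheses (St' : stepw a t a_t ct mt ft') (Su' : stepw a_t u a_tu cu mu fu').
Hypothesis t_neq_u : t != u.

Let t_rest : t \in rest a u. Proof. by rewrite mem_rest t_neq_u (stepw_task St'). Qed.
Let u_rest : u \in rest a t. Proof. by rewrite mem_rest eq_sym t_neq_u (stepw_task Su). Qed.

(* Sends the copies of mu and mt made along u-then-t to those made along
   t-then-u, and fixes the remaining tasks. *)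
Let phi y :=
  if y \in map ft (tasks mt) then ft' (inv_in ft (tasks mt) y)
  else if y \in map fu (tasks mu) then fu' (inv_in fu (tasks mu) y) else y.

Let phi_rest y : y \in rest a u -> y != t -> y \in rest a_u t /\ phi y = y.
Proof.
move=> yr yt; have yr' : y \in rest a_u t by rewrite mem_rest yt (stepw_mem_rest Su).
by rewrite /phi (stepw_rest_not_new St) // (stepw_rest_not_new Su).
Qed.

Let phi_u x : x \in tasks mu -> fu x \in rest a_u t /\ phi (fu x) = fu' x.
Proof.
move=> xm; have fxr : fu x \in rest a_u t.
  rewrite mem_rest (stepw_mem_new Su) // andbT.
  by apply: contraNneq (stepw_fresh Su xm) => ->.
by rewrite /phi (stepw_rest_not_new St) // map_f // inv_inK //; apply: stepw_inj Su.
Qed.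

Let phi_t x : x \in tasks mt -> phi (ft x) = ft' x.
Proof. by move=> xm; rewrite /phi map_f // inv_inK //; apply: stepw_inj St. Qed.

Variant swap_spec : nat -> nat -> Prop :=
  | SwapRest y of y \in rest a u & y \in rest a_u t & y \in rest a t & y \in rest a_t u :
      swap_spec y y
  | SwapU x of x \in tasks mu & fu x \in rest a_u t : swap_spec (fu x) (fu' x)
  | SwapT x of x \in tasks mt & ft' x \in rest a_t u : swap_spec (ft x) (ft' x).

Let swapP y : y \in tasks a_ut -> swap_spec y (phi y).
Proof.
case/(stepw_memP St) => [yr|[x xm ->]]; last first.
  rewrite phi_t //; apply: SwapT => //.
  rewrite mem_rest (stepw_mem_new St') // andbT.
  by apply: contraNneq (stepw_fresh St' xm) => ->.
have /(stepw_memP Su)[yr'|[x xm ->]] : y \in tasks a_u by move: yr; rewrite mem_rest => /andP[].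
  move: (yr) (yr'); rewrite !mem_rest => /andP[yt _] /andP[yu ya].
  have yr_t : y \in rest a t by rewrite mem_rest yt.
  have [_ ->] := phi_rest yr' yt.
  by apply: SwapRest; rewrite // mem_rest yu (stepw_mem_rest St').
by have [fxr ->] := phi_u xm; apply: SwapU.
Qed.

Let swap_perm : perm_eq (map phi (tasks a_ut)) (tasks a_tu).
Proof.
set R := [seq y <- rest a u | y != t].
have R_sym : [seq y <- rest a t | y != u] = R.
  by rewrite /R /rest -!filter_predI; apply: eq_filter => y /=; rewrite andbC.
have P_ut := perm_trans (stepw_tasks St) (perm_cat (stepw_rest Su t_rest) (perm_refl _)).
have P_tu := perm_trans (stepw_tasks Su') (perm_cat (stepw_rest St' u_rest) (perm_refl _)).
have phi_R : map phi R = R.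
  by rewrite -[RHS]map_id; apply/eq_in_map => y; rewrite mem_filter => /andP[yt /phi_rest[]].
have phi_u_t : map phi (map fu (tasks mu) ++ map ft (tasks mt)) =
    map fu' (tasks mu) ++ map ft' (tasks mt).
  by rewrite map_cat -!map_comp; congr (_ ++ _); apply/eq_in_map => x xm /=;
    [case: (phi_u xm) | rewrite phi_t].
apply: perm_trans (perm_map phi P_ut) _.
rewrite -catA map_cat phi_R phi_u_t perm_sym (perm_trans P_tu) // R_sym -!catA.
by rewrite perm_cat2l perm_catC.
Qed.

Lemma stepw_swap : uniq (tasks a_tu) -> iso a_ut a_tu.
Proof.
move=> u_tu; have tr := t_rest; have ur := u_rest.
apply: (iso_of_perm (f := phi) u_tu swap_perm).
- move=> y /swapP[{}y yr yr' yr'' yr''' | x xm xr | x xm xr].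
  + by rewrite (stepw_lab_rest Su') // (stepw_lab_rest St') // (stepw_lab_rest St) //
      (stepw_lab_rest Su).
  + by rewrite (stepw_lab_new Su') // (stepw_lab_rest St) // (stepw_lab_new Su).
  + by rewrite (stepw_lab_rest Su') // (stepw_lab_new St') // (stepw_lab_new St).
move=> y z /swapP[{}y yr yr' yr'' yr''' | x xm xr | x xm xr]
  /swapP[{}z zr zr' zr'' zr''' | x' x'm x'r | x' x'm x'r].
- by rewrite (stepw_prec_rest Su') // (stepw_prec_rest St') // (stepw_prec_rest St) //
    (stepw_prec_rest Su).
- by rewrite (stepw_prec_rest_new Su') // (stepw_prec_rest St') // (stepw_prec_rest St) //
    (stepw_prec_rest_new Su).
- by rewrite (stepw_prec_rest Su') // (stepw_prec_rest_new St') // (stepw_prec_rest_new St) //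
    (stepw_prec_rest Su).
- by rewrite (stepw_prec_new_rest Su') // (stepw_prec_rest St') // (stepw_prec_rest St) //
    (stepw_prec_new_rest Su).
- by rewrite (stepw_prec_new Su') // (stepw_prec_rest St) // (stepw_prec_new Su).
- by rewrite (stepw_prec_new_rest Su') // (stepw_prec_rest_new St') //
    (stepw_prec_rest_new St) // (stepw_prec_new_rest Su).
- by rewrite (stepw_prec_rest Su') // (stepw_prec_new_rest St') // (stepw_prec_new_rest St) //
    (stepw_prec_rest Su).
- by rewrite (stepw_prec_rest_new Su') // (stepw_prec_new_rest St') //
    (stepw_prec_new_rest St) // (stepw_prec_rest_new Su).
- by rewrite (stepw_prec_rest Su') // (stepw_prec_new St') // (stepw_prec_new St).
Qed.

End Swap.

Lemma reach_primitive a y : reach M a y -> primitive a -> y = a.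
Proof.
case=> [//|x t x1 x2 St _] /allP x_prim.
have := step_task_compound St; rewrite mem_compound_tasks => /andP[tx].
by rewrite (negPf (x_prim t tx)).
Qed.

Lemma reach_step_first a y t : uniq (tasks a) -> reach M a y -> primitive y ->
  t \in compound_tasks a -> exists b y', [/\ step M a t b, reach M b y' & iso y y'].
Proof.
move=> ua r; elim: r ua t => [x|x u x1 x2 Sx r IH] ux t y_prim tc.
  move: tc; rewrite mem_compound_tasks => /andP[tx].
  by move/allP: y_prim => /(_ t tx)/negPf->.
have [<-|u_neq_t] := eqVneq u t; first by exists x1, x2; split=> //; apply: iso_refl.
have t_neq_u : t != u by rewrite eq_sym.
have [b1 [y1 [S1 r1 y_y1]]] :=
  IH (step_uniq ux Sx) t y_prim (step_compound_tasks Sx tc t_neq_u).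
(* Decompose t first and u second; by stepw_swap this leads to a network
   isomorphic to b1, from which the rest of the decomposition is transferred. *)
have /stepP[cu [mu [fu Su]]] := Sx; have /stepP[ct [mt [ft St]]] := S1.
have tx : t \in tasks x by move: tc; rewrite mem_compound_tasks => /andP[].
have t_rest : t \in rest x u by rewrite mem_rest t_neq_u.
have u_rest : u \in rest x t by rewrite mem_rest u_neq_t (stepw_task Su).
have St' := stepw_decomp tx
  (etrans (esym (stepw_lab_rest Su t_rest)) (stepw_lab St)) (stepw_method St).
have Su' := stepw_decomp (stepw_mem_rest St' u_rest)
  (etrans (stepw_lab_rest St' u_rest) (stepw_lab Su)) (stepw_method Su).
have uc := stepw_uniq Su' (stepw_uniq St' ux).
have [y2 r2 y1_y2] := reach_transfer (stepw_swap Su St St' Su' t_neq_u uc) uc r1.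
exists (decomp x t mt), y2; split; last exact: iso_trans y_y1 y1_y2.
- by apply/stepP; exists ct, mt, (addn (offset x)).
- apply: (reachS (t := u) _ r2); apply/stepP.
  by exists cu, mu, (addn (offset (decomp x t mt))).
Qed.

Lemma reach_levelR S a y : uniq S -> {subset S <= compound_tasks a} -> uniq (tasks a) ->
  reach M a y -> primitive y -> exists x y', [/\ levelR M S a x, reach M x y' & iso y y'].
Proof.
elim: S a y => [|t S IH] a y uS Sa ua r y_prim.
  by exists a, y; split; [apply: levelR0 | | apply: iso_refl].
case/andP: uS => tS uS.
have [b [y1 [Sb r1 y_y1]]] := reach_step_first ua r y_prim (Sa t (mem_head t S)).
have [x [y' [lx r' y1_y']]] := IH b y1 uS (step_compound_tasks_sub tS Sa Sb)
  (step_uniq ua Sb) r1 (iso_primitive y_y1 y_prim).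
by exists x, y'; split; [apply: levelRS Sb lx | | apply: iso_trans y_y1 y1_y'].
Qed.

Lemma size_method_le_Cs c m : List.In (c, m) M -> size (tasks m) <= Cs M.
Proof. exact: (In_leq_bigmax (fun p => size (tasks p.2))). Qed.

Lemma step_size a t b : uniq (tasks a) -> step M a t b ->
  exists2 k, k <= Cs M & size (tasks b) + 1 = size (tasks a) + k /\ Cnum b + 1 <= Cnum a + k.
Proof.
move=> ua /stepP[c [m [f st]]]; exists (size (tasks m)).
  exact: size_method_le_Cs (stepw_method st).
have rest_rem : rest a t = rem t (tasks a) by rewrite rem_filter.
have a_perm := perm_to_rem (stepw_task st).
split.
  by rewrite (perm_size (stepw_tasks st)) size_cat size_map rest_rem (perm_size a_perm) /=; lia.
rewrite /Cnum /compound_tasks !size_filter (permP (stepw_tasks st)) (permP a_perm) count_cat /=.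
rewrite (stepw_lab st) -rest_rem (eq_in_count (a2 := fun x => is_compound (lab a x))); last first.
  by move=> y yr; rewrite /= (stepw_lab_rest st).
have := count_size (fun x => is_compound (lab b x)) (map f (tasks m)); rewrite size_map /=.
by move: (count _ (rest a t)) (count _ (map f _)) => p q; lia.
Qed.

Lemma levelR_size S a x : uniq (tasks a) -> levelR M S a x ->
  exists2 N, N <= size S * Cs M & [/\ size (tasks x) + size S = size (tasks a) + N,
    Cnum x + size S <= Cnum a + N & uniq (tasks x)].
Proof.
move=> ua l; elim: l ua => [b|t S' b b1 b2 Sb _ IH] ub; first by exists 0; rewrite ?addn0.
have [k k_le [size_b1 Cnum_b1]] := step_size ub Sb.
have [N N_le [size_b2 Cnum_b2 ub2]] := IH (step_uniq ub Sb).
by exists (k + N); [rewrite mulSn leq_add | split=> //=; lia].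
Qed.

Lemma level_size a x : uniq (tasks a) -> level M a x ->
  exists2 N, N <= Cnum a * Cs M & [/\ size (tasks x) + Cnum a = size (tasks a) + N,
    Cnum x <= N & uniq (tasks x)].
Proof.
move=> ua /(levelR_size ua)[N N_le [size_x Cnum_x ux]].
by exists N => //; split=> //; move: Cnum_x; rewrite -/(Cnum a); lia.
Qed.

Lemma reach_level a y : uniq (tasks a) -> reach M a y -> primitive y ->
  exists x y', [/\ level M a x, reach M x y' & iso y y'].
Proof. by move=> ua; apply: reach_levelR => //; apply: filter_uniq. Qed.

Lemma decomposition_size d a y : uniq (tasks a) -> Dle M a d -> decomposes_to M a y ->
  size (tasks y) + Cnum a <= size (tasks a) + Cnum a * Cs M ^ d.
Proof.
elim: d a y => [|d IH] a y ua Da [r y_prim].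
  by rewrite (reach_primitive r Da) expn0 muln1.
have [x [y' [lx r' y_y']]] := reach_level ua r y_prim.
have [N N_le [size_x Cnum_x ux]] := level_size ua lx.
have := IH x y' ux (Da x lx) (conj r' (iso_primitive y_y' y_prim)).
rewrite (iso_size y_y') expnS; have [Cs0|Cs_gt0] := posnP (Cs M).
  by move: N_le; rewrite Cs0 muln0 leqn0 => /eqP N0; move: Cnum_x size_x; rewrite N0; nia.
have : 0 < Cs M ^ d by rewrite expn_gt0 Cs_gt0.
nia.
Qed.

End Steps.

Section Representatives.
Variables A C : eqType.
Implicit Types s : seq (TN A C).

Lemma iso_reps_cover s x : List.In x s -> exists2 y, List.In y (iso_reps s) & iso x y.
Proof.
elim: s => [//|z s IH] /= xs; case: excluded_middle_informative => [[y [yr z_y]]|no_rep].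
  by case: xs => [<-|/IH//]; exists y.
case: xs => [<-|/IH[y yr x_y]]; first by exists z; [left | apply: iso_refl].
by exists y; first right.
Qed.

Lemma in_iso_reps s y : List.In y (iso_reps s) -> List.In y s.
Proof.
elim: s => [//|z s IH] /=; case: excluded_middle_informative => [z_rep|no_rep] ys.
  by right; apply: IH.
by case: ys => [<-|/IH]; [left | right].
Qed.

Lemma noniso_size_le s (L : seq (TN A C)) :
  (forall x, List.In x s -> exists2 z, List.In z L & iso x z) -> pairwise_noniso s ->
  size s <= size L.
Proof.
elim: s L => [//|x s IH] L cover noniso /=.
have [z zL x_z] := cover x (or_introl erefl).
have [L1 [L2 L_eq]] := List.in_split z L zL; subst L.
rewrite size_cat /= addnS ltnS -size_cat; apply: IH.
- move=> y ys; have [z' z'L y_z'] := cover y (or_intror ys).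
  exists z' => //; apply: List.in_or_app.
  have := List.in_app_or _ _ _ z'L; case=> [|[z_z'|]]; [by left | | by right].
  (* z' = z is impossible, as y would then be isomorphic to x. *)
  have [s1 [s2 s_eq]] := List.in_split y s ys; case: (noniso [::] s1 s2 x y).
    by rewrite s_eq.
  by apply: iso_trans x_z _; rewrite z_z'; apply: iso_sym.
- by move=> s1 s2 s3 x' y' s_eq; apply: (noniso (x :: s1) s2 s3); rewrite s_eq.
Qed.

End Representatives.

Lemma Cnum_primitive (A C : eqType) (a : TN A C) : primitive a -> Cnum a = 0.
Proof.
move=> a_prim; apply/eqP.
by rewrite /Cnum /compound_tasks size_filter -leqn0 leqNgt -has_count -all_predC.
Qed.

Section Counting.
Variables (A C : eqType) (M : seq (C * TN A C)).
Hypothesis wfM : forall m, List.In m M -> wf m.2.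
Implicit Types (a b : TN A C) (L R : seq (TN A C)).

Definition methods (c : C) : seq (TN A C) := [seq p.2 | p <- M & p.1 == c].

Lemma in_methods c m : List.In m (methods c) <-> List.In (c, m) M.
Proof.
rewrite /methods; elim: M => [//|[c' m'] M' IH] /=.
case: eqP => [->|c'_neq_c] /=.
  by split=> [[->|/IH]|[[->]|/IH]]; auto.
by split=> [/IH|[[/c'_neq_c]|/IH]]; auto.
Qed.

Lemma nclasses_le_Cc c m : List.In (c, m) M -> nclasses (methods c) <= Cc M.
Proof. exact: (In_leq_bigmax (fun p => nclasses (methods p.1))). Qed.

Lemma Cc_gt0 p : List.In p M -> 0 < Cc M.
Proof.
case: p => c m cm; apply: leq_trans (nclasses_le_Cc cm).
have [y yr _] := iso_reps_cover ((in_methods c m).2 cm).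
by rewrite /nclasses; case: (iso_reps _) yr.
Qed.

Lemma step_representatives a t : uniq (tasks a) -> t \in compound_tasks a ->
  exists R, [/\ size R <= Cc M, forall r, List.In r R -> step M a t r &
    forall b, step M a t b -> exists2 r, List.In r R & iso b r].
Proof.
move=> ua; rewrite mem_compound_tasks => /andP[ta]; case ac: (lab a t) => [//|c] _.
exists [seq decomp a t m | m <- iso_reps (methods c)]; split.
- rewrite size_map; case reps: (iso_reps _) => [//|m ms]; rewrite -reps.
  by apply: (@nclasses_le_Cc c m); apply/in_methods/in_iso_reps; rewrite reps; left.
- move=> _ /List.in_map_iff[m [<- mr]]; apply/stepP; exists c, m, (addn (offset a)).
  exact: stepw_decomp ta ac (proj1 (in_methods c m) (in_iso_reps mr)).
- move=> b /stepP[c' [m' [f st]]].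
  have c'c : c' = c by move: (stepw_lab st); rewrite ac => -[].
  subst c'; have [m mr [h m'_h]] := iso_reps_cover ((in_methods c m').2 (stepw_method st)).
  have st' := stepw_decomp ta ac (proj1 (in_methods c m) (in_iso_reps mr)).
  exists (decomp a t m); first exact: List.in_map.
  exact: stepw_iso (isow_id a) m'_h (stepw_uniq wfM st' ua) st st'.
Qed.

Definition iso_cover a L : Prop :=
  forall y, decomposes_to M a y -> exists2 z, List.In z L & iso y z.

Lemma common_iso_cover R k :
  (forall r, List.In r R -> exists2 L, size L <= k & iso_cover r L) ->
  exists2 L, size L <= size R * k & forall r, List.In r R -> iso_cover r L.
Proof.
elim: R => [|r R IH] covers; first by exists [::].
have [L1 L1_le cov1] := covers r (or_introl erefl).
have [L2 L2_le cov2] := IH (fun r' r'R => covers r' (or_intror r'R)).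
exists (L1 ++ L2); first by rewrite size_cat mulSn leq_add.
move=> r' [<-|r'R] y dy.
  by have [z zL y_z] := cov1 y dy; exists z => //; apply: List.in_or_app; left.
by have [z zL y_z] := cov2 r' r'R y dy; exists z => //; apply: List.in_or_app; right.
Qed.

Lemma levelR_cover k S a : uniq S -> {subset S <= compound_tasks a} -> uniq (tasks a) ->
  (forall x, levelR M S a x -> exists2 L, size L <= k & iso_cover x L) ->
  exists2 L, size L <= Cc M ^ size S * k & iso_cover a L.
Proof.
elim: S a => [|t S IH] a uS Sa ua covers /=.
  by rewrite expn0 mul1n; apply: covers; apply: levelR0.
case/andP: uS => tS uS; have tc := Sa t (mem_head t S).
have [R [R_le R_step R_rep]] := step_representatives ua tc.
have [L L_le covL] : exists2 L, size L <= size R * (Cc M ^ size S * k) &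
    forall r, List.In r R -> iso_cover r L.
  apply: common_iso_cover => r rR; have Sr := R_step r rR.
  apply: IH uS (step_compound_tasks_sub tS Sa Sr) (step_uniq wfM ua Sr) _ => x lx.
  exact: covers x (levelRS Sr lx).
exists L; first by rewrite expnS -mulnA (leq_trans L_le) // leq_mul2r R_le orbT.
move=> y [r y_prim].
have [b [y1 [Sb r1 y_y1]]] := reach_step_first wfM ua r y_prim tc.
have [r' r'R b_r'] := R_rep b Sb.
have [y2 r2 y1_y2] := reach_transfer wfM b_r' (step_uniq wfM ua (R_step r' r'R)) r1.
have y2_prim := iso_primitive y1_y2 (iso_primitive y_y1 y_prim).
have [z zL y2_z] := covL r' r'R y2 (conj r2 y2_prim).
by exists z => //; apply: iso_trans y_y1 (iso_trans y1_y2 y2_z).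
Qed.

Lemma level_cover d a n : 0 < Cc M -> uniq (tasks a) -> Cnum a <= n -> Dle M a d ->
  exists2 L, size L <= Cc M ^ (\sum_(0 <= i < d) n * Cs M ^ i) & iso_cover a L.
Proof.
move=> Cc_pos; elim: d a n => [|d IH] a n ua a_n Da.
  exists [:: a]; first by rewrite big_geq.
  by move=> y [r _]; rewrite (reach_primitive r Da); exists a; [left | apply: iso_refl].
have covers x : level M a x ->
    exists2 L, size L <= Cc M ^ (\sum_(0 <= i < d) (n * Cs M) * Cs M ^ i) & iso_cover x L.
  move=> lx; have [N N_le [_ Cnum_x ux]] := level_size wfM ua lx.
  apply: IH ux _ (Da x lx); apply: leq_trans Cnum_x (leq_trans N_le _).
  by rewrite leq_mul2r a_n orbT.
have [L L_le covL] := levelR_cover (filter_uniq _ ua) (fun _ => id) ua covers.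
exists L => //; apply: leq_trans L_le _.
rewrite big_nat_recl // expn0 muln1 expnD leq_mul ?leq_pexp2l //.
by apply: eq_leq; apply: eq_bigr => i _; rewrite expnS mulnA.
Qed.

Lemma decompositions_cover d a : uniq (tasks a) -> Dle M a d ->
  exists2 L, size L <= Cc M ^ (\sum_(0 <= i < d) Cnum a * Cs M ^ i) & iso_cover a L.
Proof.
move=> ua Da; have [M_nil|[p pM]] : M = [::] \/ exists p, List.In p M.
- by case: (M) => [|p M']; [left | right; exists p; left].
- (* Without methods Cc M = 0, while level_cover needs 0 < Cc M. *)
  have [a_prim|a_nprim] := boolP (primitive a).
    exists [:: a]; first by rewrite Cnum_primitive // big1 // => i _; rewrite mul0n.
    by move=> y [r _]; rewrite (reach_primitive r a_prim); exists a; [left | apply: iso_refl].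
  exists [::] => // y [r y_prim].
  case: r y_prim a_nprim => [x ->//|x t x1 x2 /stepP[c [m [f /stepw_method]]]].
  by rewrite M_nil.
- exact: level_cover (Cc_gt0 pM) ua (leqnn _) Da.
Qed.

End Counting.

Theorem lemma1 (A C : eqType) (M : seq (C * TN A C)) (tn : TN A C) (d : nat) :
  (forall m, List.In m M -> wf m.2) ->
  wf tn ->
  is_Cd M tn d ->
  (forall s : seq (TN A C),
      (forall x, List.In x s -> decomposes_to M tn x) ->
      pairwise_noniso s ->
      size s <= Cc M ^ (\sum_(0 <= i < d) Cnum tn * Cs M ^ i))
  /\
  (forall tn' : TN A C, decomposes_to M tn tn' ->
      ((size (tasks tn'))%:Z <=
       (size (tasks tn))%:Z + (Cnum tn)%:Z * ((Cs M)%:Z ^+ d - 1))%R).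
Proof.
move=> wfM [utn _] [Dd _]; split.
- move=> s decs noniso; have [L L_le covL] := decompositions_cover wfM utn Dd.
  apply: leq_trans L_le; apply: noniso_size_le noniso => x xs.
  exact: covL (decs x xs).
- move=> y dy; have := decomposition_size wfM utn Dd dy.
  have -> : ((Cs M)%:Z ^+ d = (Cs M ^ d)%N%:Z)%R by rewrite -!natz natrX.
  by rewrite mulrBr mulr1 -PoszM; lia.
Qed.
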